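(* Suppose we have $n\ge3$ agents with additive, identical, normalized valuations, provided with a prediction of accuracy $\eta<1-\frac{1-a^2}{4+(2n-3)a}$ for some given $a\in(0,1]$; that is, the allowed error between the prediction and the true valuation is $1-\eta>\frac{1-a^2}{4+(2n-3)a}$. Then there is no online algorithm that guarantees an $a$-EFX allocation for all instances with error at most $1-\eta$, even when $T'=T=2n-1$ and the prediction and the true valuation are $3$-value functions.
   Context: Online fair division with predictions and identical valuations: agents $[n]$; goods $g_1,\dots,g_T$ arrive one per time step; all agents share a true additive normalized valuation $v$ ($v(g_t)\ge0$, $\sum_{t\in[T]}v(g_t)=1$, $v(S)=\sum_{g\in S}v(g)$), and before any arrival the algorithm receives a prediction $p=(p(g_1),\dots,p(g_{T'}))$ (an additive normalized valuation over $T'$ predicted goods) and the accuracy level. Error $\frac12\sum_{t=1}^{\max\{T,T'\}}|p(g_t)-v(g_t)|$ (missing entries set to $0$); accuracy $\eta$ means the error is at most $1-\eta$. At time $t$, $v(g_t)$ is revealed and $g_t$ must be irrevocably allocated. For $S\ne\emptyset$, $\bar S=S\setminus\{g\}$ with $g\in\arg\max_{g'\in S}v(S\setminus\{g'\})$, $\bar\emptyset=\emptyset$. An allocation is $a$-EFX if $v(A_i)\ge a\cdot v(\bar A_j)$ for all $i,j$. A function is $k$-value if it takes at most $k$ distinct values. *)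

From HB Require Import structures.
From mathcomp Require Import all_boot all_order all_algebra.
From mathcomp Require Import reals.
Set Implicit Arguments. Unset Strict Implicit. Unset Printing Implicit Defensive.
Import Order.TTheory GRing.Theory Num.Theory.
Local Open Scope ring_scope.

Section Defs.
Variable R : realType.
Variable T : nat.

(* additive valuation on goods 'I_T, given by the values of single goods *)
Definition normalized (v : 'I_T -> R) : Prop :=
  (forall t, 0 <= v t) /\ \sum_(t < T) v t = 1.

Definition kvalue (k : nat) (v : 'I_T -> R) : Prop :=
  (size (undup [seq v t | t <- enum 'I_T]) <= k)%N.

(* error (T' = T): 1/2 * sum_t |p t - v t| *)
Definition pred_error (p v : 'I_T -> R) : R :=
  2^-1 * \sum_(t < T) `|p t - v t|.

Definition val_set (v : 'I_T -> R) (S : {set 'I_T}) : R := \sum_(t in S) v t.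

Definition val_bar (v : 'I_T -> R) (S : {set 'I_T}) : R :=
  \big[Num.max/0]_(g in S) val_set v (S :\ g).

Variable n : nat.

Definition bundle (A : 'I_T -> 'I_n) (i : 'I_n) : {set 'I_T} := [set t | A t == i].

Definition aEFX (a : R) (v : 'I_T -> R) (A : 'I_T -> 'I_n) : Prop :=
  forall i j : 'I_n, a * val_bar v (bundle A j) <= val_set v (bundle A i).

(* online algorithm (deterministic): knows the prediction and the values
   of the goods arrived so far (including the current one), outputs an agent *)
Definition online_alg := ('I_T -> R) -> seq R -> 'I_n.

Definition prefix (v : 'I_T -> R) (t : 'I_T) : seq R :=
  map v [seq s <- enum 'I_T | (nat_of_ord s <= nat_of_ord t)%N].

Definition run (alg : online_alg) (p v : 'I_T -> R) : 'I_T -> 'I_n :=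
  fun t => alg p (prefix v t).
End Defs.

From HB Require Import structures.
From mathcomp Require Import all_boot all_order all_algebra.
From mathcomp Require Import reals.
From mathcomp Require Import lra zify.
Import Order.TTheory GRing.Theory Num.Theory.
Local Open Scope ring_scope.
Set Implicit Arguments. Unset Strict Implicit. Unset Printing Implicit Defensive.

(* The adversary releases m = 2n-3 small goods of value s, then two large goods.
   Whatever the algorithm does with the small goods, it must commit before it
   sees the large ones, and the prediction cannot distinguish the two true
   valuations (s, ..., s, x, M - x) and (s, ..., s, M/2, M/2).
   - If two agents got no small good, one of them ends up holding at most the
     good of value x, while by pigeonhole some agent holds three small goods;
     as x < 2as, the first valuation violates a-EFX.
   - Otherwise some agent not receiving a large good holds at most two small
     goods, while some bundle holds a good of value M/2 together with another
     good; as 4s < aM, the second valuation violates a-EFX.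
   The prediction is the average of the two valuations; letting s, x, M
   approach a/(4+ma), 2as, 4s/a makes its error approach (1-a^2)/(4+ma). *)

Lemma val_set_subset (R : realType) T (v : 'I_T -> R) (X Y : {set 'I_T}) :
  (forall t, 0 <= v t) -> X \subset Y -> val_set v X <= val_set v Y.
Proof.
move=> v_ge0 /subsetP XY; rewrite /val_set [leLHS]big_mkcond [leRHS]big_mkcond.
apply: ler_sum => t _; case: ifP => [/XY -> //|_]; by case: ifP.
Qed.

Lemma val_set1 (R : realType) T (v : 'I_T -> R) g : val_set v [set g] = v g.
Proof. by rewrite /val_set big_set1. Qed.

Lemma val_set_const (R : realType) T (v : 'I_T -> R) (X : {set 'I_T}) c :
  {in X, forall t, v t = c} -> val_set v X = #|X|%:R * c.
Proof. by move=> vX; rewrite /val_set (eq_bigr _ vX) sumr_const mulr_natl. Qed.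

Lemma le_val_bar (R : realType) T (v : 'I_T -> R) (S : {set 'I_T}) g :
  g \in S -> val_set v (S :\ g) <= val_bar v S.
Proof.
by move=> gS; rewrite /val_bar (bigD1 g) //= le_max lexx.
Qed.

Lemma not_aEFX (R : realType) T n (a : R) (v : 'I_T -> R) (A : 'I_T -> 'I_n)
    i j g (X Y : {set 'I_T}) :
  (forall t, 0 <= v t) -> 0 <= a ->
  bundle A i \subset X -> g \in bundle A j -> Y \subset bundle A j :\ g ->
  val_set v X < a * val_set v Y -> ~ aEFX a v A.
Proof.
move=> v_ge0 a_ge0 AiX gAj YAj ltXY /(_ i j); apply/negP; rewrite -ltNge.
apply: le_lt_trans (val_set_subset v_ge0 AiX) (lt_le_trans ltXY _).
by rewrite ler_wpM2l // (le_trans (val_set_subset v_ge0 YAj)) ?le_val_bar.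
Qed.

Lemma run_prefix (R : realType) T n (alg : online_alg R T n) (p v v' : 'I_T -> R)
    (t : 'I_T) :
  (forall t' : 'I_T, (t' <= t)%N -> v t' = v' t') -> run alg p v t = run alg p v' t.
Proof.
move=> vv'; rewrite /run /prefix; congr (alg p _).
by apply/eq_in_map => t'; rewrite mem_filter => /andP[/vv' ->].
Qed.

Lemma sum_card_bundleI T n (A : 'I_T -> 'I_n) (S : {set 'I_T}) :
  (\sum_i #|bundle A i :&: S| = #|S|)%N.
Proof.
rewrite -sum1_card (partition_big A xpredT) //=.
apply: eq_bigr => i _; rewrite -sum1_card.
by apply: eq_bigl => t; rewrite !inE andbC.
Qed.

Lemma sum_split_off2 n (k : 'I_n -> nat) e1 e2 : e1 != e2 ->
  (\sum_i k i = k e1 + k e2 + \sum_(i | (i != e1) && (i != e2)) k i)%N.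
Proof. by move=> ne; rewrite (bigD1 e1) // (bigD1 e2) 1?eq_sym //= addnA. Qed.

Lemma sum_const_off2 n (e1 e2 : 'I_n) c : e1 != e2 ->
  (\sum_(i | (i != e1) && (i != e2)) c = (n - 2) * c)%N.
Proof.
move=> ne; have := sum_split_off2 (fun=> c) ne.
by rewrite sum_nat_const card_ord mulnBl; lia.
Qed.

Lemma exists_gt_off2 n (k : 'I_n -> nat) e1 e2 c : e1 != e2 ->
  (k e1 + k e2 + (n - 2) * c < \sum_i k i)%N -> exists i, (c < k i)%N.
Proof.
move=> ne; rewrite (sum_split_off2 _ ne) -(sum_const_off2 _ ne) ltn_add2l.
case: (boolP [exists i, (c < k i)%N]) => [/existsP //|/existsPn k_le].
by rewrite ltnNge leq_sum // => i _; rewrite leqNgt k_le.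
Qed.

Lemma exists_le_off2 n (k : 'I_n -> nat) e1 e2 c : e1 != e2 ->
  (\sum_i k i < k e1 + k e2 + (n - 2) * c.+1)%N ->
  exists i, [&& i != e1, i != e2 & (k i <= c)%N].
Proof.
move=> ne; rewrite (sum_split_off2 _ ne) -(sum_const_off2 _ ne) ltn_add2l.
case: (boolP [exists i, [&& i != e1, i != e2 & (k i <= c)%N]]) => [/existsP //|/existsPn k_gt].
rewrite ltnNge leq_sum // => i /andP[i1 i2].
by have := k_gt i; rewrite i1 i2 /= -ltnNge.
Qed.

Lemma exists_neq n (j : 'I_n) : (1 < n)%N -> exists i : 'I_n, i != j.
Proof.
move=> n_gt1; have n_gt0 := ltnW n_gt1.
case: (eqVneq j (Ordinal n_gt0)) => [->|]; last by exists (Ordinal n_gt0); rewrite eq_sym.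
by exists (Ordinal n_gt1); apply/eqP => /(congr1 val).
Qed.

Lemma instance_parameters (R : realFieldType) (N a d : R) :
  0 <= N -> 0 < a -> a <= 1 -> (1 - a ^+ 2) / (4 + N * a) < d ->
  exists s x M : R, [/\ 0 < s, 0 <= x < 2 * a * s, 4 * s < a * M,
    N * s + M = 1 & (M / 2 - x) / 2 <= d].
Proof.
move=> N0 a0 a1 err_lt.
have Na0 : 0 <= N * a by rewrite mulr_ge0 // ltW.
pose t := (4 + N * a)^-1.
have t0 : 0 < t by rewrite invr_gt0; lra.
have tD : t * (4 + N * a) = 1 by rewrite mulVf //; lra.
have Nat0 : 0 <= N * a * t by rewrite mulr_ge0 // ltW.
pose mu := Num.min (d - (1 - a ^+ 2) * t) (1 / 2).
have err_t : (1 - a ^+ 2) * t < d by [].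
have mu0 : 0 < mu by rewrite lt_min; apply/andP; split; lra.
have mu_le : mu <= d - (1 - a ^+ 2) * t by rewrite ge_min lexx.
have mu_half : mu <= 1 / 2 by rewrite ge_min lexx orbT.
pose s := (1 - mu) * a * t.
have s0 : 0 < s by rewrite !mulr_gt0 //; lra.
have as0 : 0 < a * s * mu by apply: mulr_gt0 => //; apply: mulr_gt0.
exists s, (2 * a * (1 - mu) * s), (1 - N * s); split.
- exact: s0.
- rewrite mulr_ge0 ?mulr_ge0 ?ltW //=; lra.
- have : s * (4 + N * a) = (1 - mu) * a by rewrite -mulrA tD mulr1.
  have : 0 < mu * a by apply: mulr_gt0.
  lra.
- by rewrite addrC subrK.
(* Using 1 = t (4 + N a), the error is the target bound plus a term of order mu. *)
have err_eq : ((1 - N * s) / 2 - 2 * a * (1 - mu) * s) / 2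
    = (1 - a ^+ 2) * t + mu * (t * (N * a + 4 * (a ^+ 2 * (2 - mu)))) / 4.
  rewrite /s; lra.
have a2 : a ^+ 2 * (2 - mu) <= 2 by rewrite expr2; nra.
have tQ : t * (N * a + 4 * (a ^+ 2 * (2 - mu))) <= 2.
  by apply: (le_trans (ler_wpM2l (ltW t0) (_ : _ <= N * a + 8))); lra.
have := ler_wpM2l (ltW mu0) tQ; lra.
Qed.

Section ThreeLevelInstance.
Variables (R : realType) (m n : nat).
Implicit Types (s u w : R) (t : 'I_m.+2) (A : 'I_m.+2 -> 'I_n).

Definition val3 s u w : 'I_m.+2 -> R :=
  fun t => if (t < m)%N then s else if t == m :> nat then u else w.

Definition small_goods : {set 'I_m.+2} := [set t : 'I_m.+2 | (t < m)%N].
Definition mid_good : 'I_m.+2 := Ordinal (leqnSn m.+1).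
Definition last_good : 'I_m.+2 := ord_max.

Definition small_bundle A i := bundle A i :&: small_goods.

Lemma good_cases t : [\/ t \in small_goods, t = mid_good | t = last_good].
Proof.
rewrite inE; case: (ltnP t m) => [|m_le_t]; first by constructor 1.
have := ltn_ord t; rewrite ltnS leq_eqVlt ltnS => /orP[/eqP t_last|t_le_m].
  by constructor 3; apply: val_inj.
by constructor 2; apply: val_inj => /=; apply/eqP; rewrite eqn_leq t_le_m.
Qed.

Lemma mid_neq_last : mid_good != last_good.
Proof. by rewrite -(inj_eq val_inj) /= neq_ltn ltnSn. Qed.

Lemma mid_notin_small : mid_good \notin small_goods.
Proof. by rewrite inE ltnn. Qed.

Lemma last_notin_small : last_good \notin small_goods.
Proof. by rewrite inE -ltnNge ltnW. Qed.

Lemma val3_small s u w t : t \in small_goods -> val3 s u w t = s.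
Proof. by rewrite inE /val3 => ->. Qed.

Lemma val3_mid s u w : val3 s u w mid_good = u.
Proof. by rewrite /val3 /= ltnn eqxx. Qed.

Lemma val3_last s u w : val3 s u w last_good = w.
Proof. by rewrite /val3 /= ltnNge leqW //= gtn_eqF. Qed.

Lemma val3_ge0 s u w : 0 <= s -> 0 <= u -> 0 <= w -> forall t, 0 <= val3 s u w t.
Proof. by move=> s0 u0 w0 t; rewrite /val3; case: ifP => //; case: ifP. Qed.

Lemma sum_goods (F : 'I_m.+2 -> R) :
  \sum_t F t = \sum_(t in small_goods) F t + F mid_good + F last_good.
Proof.
rewrite (bigD1 last_good) // (bigD1 mid_good) ?mid_neq_last //= addrC [F mid_good + _]addrC.
congr (_ + _ + _); apply: eq_bigl => t.
case: (good_cases t) => [t_small|->|->].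
- by rewrite t_small; apply/andP; split; apply: contraTneq t_small => ->;
    [exact: last_notin_small | exact: mid_notin_small].
- by rewrite mid_neq_last eqxx (negbTE mid_notin_small).
- by rewrite eqxx (negbTE last_notin_small).
Qed.

Lemma card_small_goods : #|small_goods| = m.
Proof.
have small_compl : ~: small_goods = [set mid_good; last_good].
  apply/setP => t; rewrite in_setC in_set2.
  case: (good_cases t) => [t_small|->|->]; rewrite ?eqxx ?orbT ?mid_notin_small ?last_notin_small //.
  by rewrite t_small; apply/esym/norP; split; apply: contraTneq t_small => ->;
    [exact: mid_notin_small | exact: last_notin_small].
have := cardsC small_goods; rewrite small_compl cards2 mid_neq_last (card_ord m.+2).
by rewrite addnS addn1 => -[].
Qed.

Lemma sum_card_small_bundle A : (\sum_i #|small_bundle A i| = m)%N.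
Proof. by rewrite (sum_card_bundleI A small_goods) card_small_goods. Qed.

Lemma small_bundleP A i t : reflect (t \in small_goods /\ A t = i) (t \in small_bundle A i).
Proof. by rewrite !inE andbC; apply: (iffP andP) => -[-> /eqP]. Qed.

Lemma val_set_small s u w (S : {set 'I_m.+2}) :
  S \subset small_goods -> val_set (val3 s u w) S = #|S|%:R * s.
Proof. by move=> /subsetP S_small; apply: val_set_const => t /S_small /val3_small. Qed.

Lemma sum_val3 s u w : \sum_t val3 s u w t = m%:R * s + u + w.
Proof.
rewrite sum_goods val3_mid val3_last.
by rewrite (eq_bigr _ (fun t => @val3_small s u w t)) sumr_const card_small_goods mulr_natl.
Qed.

Lemma normalized_val3 s u w : 0 <= s -> 0 <= u -> 0 <= w ->
  m%:R * s + u + w = 1 -> normalized (val3 s u w).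
Proof. by move=> s0 u0 w0 sum1; split; [exact: val3_ge0 | rewrite sum_val3]. Qed.

Lemma kvalue_val3 s u w : kvalue 3 (val3 s u w).
Proof.
apply: (@leq_trans (size [:: s; u; w])) => //.
apply: uniq_leq_size; first exact: undup_uniq.
move=> z; rewrite mem_undup => /mapP[t _ ->].
by rewrite /val3 !inE; case: ifP => _; [|case: ifP => _]; rewrite eqxx ?orbT.
Qed.

Lemma pred_error_val3 s u w u' w' :
  pred_error (val3 s u w) (val3 s u' w') = (`|u - u'| + `|w - w'|) / 2.
Proof.
rewrite /pred_error mulrC sum_goods !val3_mid !val3_last big1 ?add0r // => t t_small.
by rewrite !val3_small // subrr normr0.
Qed.

Lemma val3_not_small s u t : t \notin small_goods -> val3 s u u t = u.
Proof. by rewrite inE /val3 => /negbTE ->; case: ifP. Qed.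

Lemma not_aEFX_two_without_small (a s x M : R) A e1 e2 :
  (2 * (n - 2) < m)%N -> 0 <= a -> 0 <= s -> 0 <= x <= M -> x < 2 * a * s ->
  e1 != e2 -> small_bundle A e1 = set0 -> small_bundle A e2 = set0 ->
  ~ aEFX a (val3 s x (M - x)) A.
Proof.
move=> m_gt a0 s0 /andP[x0 xM] x_lt ne A_e1 A_e2.
have [j k_j] : exists j, (2 < #|small_bundle A j|)%N.
  apply: (exists_gt_off2 ne); rewrite sum_card_small_bundle A_e1 A_e2 cards0; lia.
pose i := if A last_good == e1 then e2 else e1.
have A_i : small_bundle A i = set0 by rewrite /i; case: ifP.
have last_i : A last_good != i.
  by rewrite /i; case: (eqVneq (A last_good) e1) => [->|//].
have [g g_j] : exists g, g \in small_bundle A j.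
  by apply/set0Pn; rewrite -card_gt0; lia.
apply: (not_aEFX (i := i) (j := j) (g := g) (X := [set mid_good]) (Y := small_bundle A j :\ g)).
- by apply: val3_ge0 => //; lra.
- exact: a0.
- apply/subsetP => t; rewrite inE => /eqP A_t; rewrite inE.
  case: (good_cases t) => [t_small|->//|t_last].
  + have : t \in small_bundle A i by apply/small_bundleP.
    by rewrite A_i inE.
  + by move: last_i; rewrite -t_last A_t eqxx.
- by move: g_j; rewrite inE => /andP[].
- by apply: setSD; apply: subsetIl.
have j_small : small_bundle A j :\ g \subset small_goods.
  by apply: subset_trans (subD1set _ _) (subsetIr _ _).
rewrite val_set1 val3_mid val_set_small //.
have two_le : 2 <= (#|small_bundle A j :\ g|%:R : R).
  by rewrite ler_nat; have := cardsD1 g (small_bundle A j); rewrite g_j; lia.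
apply: (lt_le_trans x_lt); rewrite [2 * a]mulrC -mulrA.
exact: (ler_wpM2l a0 (ler_wpM2r s0 two_le)).
Qed.

Lemma exists_bundle_with_large_good A :
  (A mid_good != A last_good ->
   (small_bundle A (A mid_good) != set0) || (small_bundle A (A last_good) != set0)) ->
  exists j g g', [/\ g \in bundle A j, g' \in bundle A j :\ g & g' \notin small_goods].
Proof.
move=> nonempty; have [E|ne] := eqVneq (A mid_good) (A last_good).
  exists (A last_good), mid_good, last_good; split; last exact: last_notin_small.
    by rewrite inE E.
  by rewrite !inE eqxx andbT eq_sym mid_neq_last.
case/orP: (nonempty ne) => /set0Pn[g /small_bundleP[g_small A_g]].
  exists (A mid_good), g, mid_good; split; last exact: mid_notin_small.
  - by rewrite inE A_g.
  - rewrite !inE eqxx andbT; apply: contraNneq mid_notin_small => ->; exact: g_small.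
exists (A last_good), g, last_good; split; last exact: last_notin_small.
- by rewrite inE A_g.
- rewrite !inE eqxx andbT; apply: contraNneq last_notin_small => ->; exact: g_small.
Qed.

Lemma not_aEFX_one_without_small (a s M : R) A :
  (1 < n)%N -> (m <= 3 * (n - 2))%N -> 0 < a -> 0 <= s -> 4 * s < a * M ->
  (forall e1 e2, e1 != e2 -> (small_bundle A e1 != set0) || (small_bundle A e2 != set0)) ->
  ~ aEFX a (val3 s (M / 2) (M / 2)) A.
Proof.
move=> n_gt1 m_le a0 s0 sM nonempty.
have M0 : 0 < M by rewrite -(pmulr_rgt0 _ a0); lra.
set j1 := A mid_good; set j2 := A last_good.
have [j2' ne12 j2_in] : exists2 j2', j1 != j2' & (j2 == j1) || (j2 == j2').
  have [E|ne] := eqVneq j2 j1; last by exists j2; rewrite 1?eq_sym // eqxx orbT.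
  by have [o o_ne] := exists_neq j1 n_gt1; exists o; rewrite 1?eq_sym // E eqxx.
have [i /and3P[i1 i2 k_i]] :
    exists i, [&& i != j1, i != j2' & (#|small_bundle A i| <= 2)%N].
  apply: (exists_le_off2 (k := fun i => #|small_bundle A i|) ne12).
  have := nonempty _ _ ne12; rewrite -!card_gt0 sum_card_small_bundle /=; lia.
have i2' : i != j2 by case/orP: j2_in => /eqP ->.
have [j [g [g' [g_j g'_j g'_large]]]] := exists_bundle_with_large_good (nonempty _ _).
apply: (not_aEFX (i := i) (j := j) (g := g) (X := small_bundle A i) (Y := [set g'])).
- by apply: val3_ge0 => //; lra.
- exact: ltW.
- apply/subsetP => t A_t; rewrite inE A_t /=.
  move: A_t; rewrite inE => /eqP A_t.
  case: (good_cases t) => [//|t_mid|t_last].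
  + by move: i1; rewrite -A_t t_mid eqxx.
  + by move: i2'; rewrite -A_t t_last eqxx.
- exact: g_j.
- by rewrite sub1set.
rewrite val_set1 val3_not_small // val_set_small ?subsetIr //.
have : (#|small_bundle A i|%:R : R) <= 2 by rewrite ler_nat.
move=> /(ler_wpM2r s0) k_s; lra.
Qed.

Lemma online_alg_fails (a s x M : R) (alg : online_alg R m.+2 n) (p : 'I_m.+2 -> R) :
  (1 < n)%N -> (2 * (n - 2) < m <= 3 * (n - 2))%N ->
  0 < a -> 0 <= s -> 0 <= x <= M -> x < 2 * a * s -> 4 * s < a * M ->
  let vA := val3 s x (M - x) in let vB := val3 s (M / 2) (M / 2) in
  ~ aEFX a vA (run alg p vA) \/ ~ aEFX a vB (run alg p vB).
Proof.
move=> n_gt1 /andP[m_gt m_le] a0 s0 xM x_lt sM vA vB.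
have same_small i : small_bundle (run alg p vA) i = small_bundle (run alg p vB) i.
  apply/setP => t; apply/small_bundleP/small_bundleP => -[t_small <-];
    split => //; apply: run_prefix => t' t'_le;
    by rewrite /vA /vB !val3_small // inE (leq_ltn_trans t'_le); rewrite inE in t_small.
case: (boolP [exists e1, exists e2, [&& e1 != e2,
    small_bundle (run alg p vA) e1 == set0 & small_bundle (run alg p vA) e2 == set0]]).
- case/existsP=> e1 /existsP[e2 /and3P[ne /eqP A_e1 /eqP A_e2]].
  by left; apply: (not_aEFX_two_without_small _ _ _ _ _ ne A_e1 A_e2) => //; apply: ltW.
- move=> /existsPn nonempty; right.
  apply: not_aEFX_one_without_small => // e1 e2 ne.
  move: nonempty => /(_ e1) /existsPn /(_ e2); rewrite ne !same_small /=.
  by rewrite negb_and.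
Qed.

Lemma no_online_aEFX (a d : R) (alg : online_alg R m.+2 n) :
  (1 < n)%N -> (2 * (n - 2) < m <= 3 * (n - 2))%N -> 0 < a -> a <= 1 ->
  (1 - a ^+ 2) / (4 + m%:R * a) < d ->
  exists p v : 'I_m.+2 -> R,
    [/\ normalized p /\ normalized v, kvalue 3 p /\ kvalue 3 v,
        pred_error p v <= d & ~ aEFX a v (run alg p v)].
Proof.
move=> n_gt1 m_bounds a0 a1 err_lt.
have [s [x [M [s0 /andP[x0 x_lt] sM sum1 err]]]] :=
  instance_parameters (ler0n _ m) a0 a1 err_lt.
have M0 : 0 < M by rewrite -(pmulr_rgt0 _ a0); lra.
have x_le : x <= M / 2.
  have : a * s <= s by rewrite ler_piMl // ltW.
  have : a * M <= M by rewrite ler_piMl // ltW.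
  lra.
(* The average of the two candidate valuations: within (M/2 - x)/2 of both. *)
pose p := val3 s ((x + M / 2) / 2) ((M - x + M / 2) / 2).
have p_ok : normalized p /\ kvalue 3 p.
  by split; [apply: normalized_val3; lra | exact: kvalue_val3].
have xM : 0 <= x <= M by apply/andP; split; lra.
have [fail|fail] := online_alg_fails alg p n_gt1 m_bounds a0 (ltW s0) xM x_lt sM.
- exists p, (val3 s x (M - x)); split => //.
  + by split=> //; apply: normalized_val3; lra.
  + by split=> //; exact: kvalue_val3.
  + by rewrite pred_error_val3 ger0_norm ?ler0_norm; lra.
- exists p, (val3 s (M / 2) (M / 2)); split => //.
  + by split=> //; apply: normalized_val3; lra.
  + by split=> //; exact: kvalue_val3.
  + by rewrite pred_error_val3 ler0_norm ?ger0_norm; lra.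
Qed.

End ThreeLevelInstance.

Theorem lemma4p8 (R : realType) (n : nat) (a eta : R) :
  (3 <= n)%N -> 0 < a -> a <= 1 ->
  (1 - a ^+ 2) / (4 + (2 * n%:R - 3) * a) < 1 - eta ->
  forall alg : online_alg R (2 * n - 1) n,
  exists p v : 'I_(2 * n - 1) -> R,
    [/\ normalized p /\ normalized v, kvalue 3 p /\ kvalue 3 v,
        pred_error p v <= 1 - eta &
        ~ aEFX a v (run alg p v)].
Proof.
move=> n_ge3 a0 a1 err_lt.
have -> : (2 * n - 1 = (2 * n - 3).+2)%N by lia.
move=> alg; apply: no_online_aEFX => //; first lia.
  by apply/andP; split; lia.
by rewrite natrB ?natrM //; lia.
Qed.
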